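(* Let $d\geq 1$, $n\geq 1$ and $1\leq a\leq d+1$ be integers. Then $$\sum_{\pi\in \mathcal F_d^{(a)}(n)}\lambda(\pi)-\sum_{\pi\in \mathcal H_d^{(a)}(n)}\lambda(\pi)=\sum_{m=1}^{n-1} f_d^{(a)}(n-m)\,f_d^{(1)}(m)-\sum_{m=1}^{n-1} f_d^{(a)}(n-m)\,f_d^{(d+1)}(m).$$ Equivalently, $\sum_{n\geq1}\Big(\sum_{\pi\in \mathcal F_d^{(a)}(n)}\lambda(\pi)-\sum_{\pi\in \mathcal H_d^{(a)}(n)}\lambda(\pi)\Big)q^n=\dfrac{q^{a+1}-q^{a+1+d}}{(1-q-q^{d+1})^2}$.
   Context: A partition is a finite nonincreasing sequence of positive integers (its parts); its size is not fixed. For a partition $\pi$, $\lambda(\pi)$ is its number of parts, $\alpha(\pi)$ its largest part, and its perimeter is $\alpha(\pi)+\lambda(\pi)-1$. A partition has $d$-distinct parts if any two of its parts differ by at least $d$. For $1\le b\le d+1$, $\mathcal F_d^{(b)}(n)$ is the set of partitions of perimeter $n$ all of whose parts are $\equiv b \pmod{d+1}$, and $f_d^{(b)}(n)=|\mathcal F_d^{(b)}(n)|$. $\mathcal H_d^{(a)}(n)$ is the set of partitions of perimeter $n$ whose parts are $d$-distinct and all $\geq a$. (The paper writes the right-hand side as $fp^{(a,1)}(n)-fp^{(a,d+1)}(n)$ where $fp^{(a,b)}(n)$ counts ordered pairs $(\pi_1,\pi_2)$ with $\pi_1\in\mathcal F_d^{(a)}(n-m)$, $\pi_2\in\mathcal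 F_d^{(b)}(m)$ for some $1\le m\le n-1$.) *)

From mathcomp Require Import all_boot all_order all_algebra.
Set Implicit Arguments. Unset Strict Implicit. Unset Printing Implicit Defensive.

Definition is_partition (s : seq nat) : bool :=
  sorted geq s && all (fun x => 0 < x) s.

Definition nparts (s : seq nat) : nat := size s.
Definition largest (s : seq nat) : nat := foldr maxn 0 s.
Definition perimeter (s : seq nat) : nat := largest s + nparts s - 1.

Definition d_distinct (d : nat) (s : seq nat) : bool :=
  pairwise (fun x y => d + y <= x) s.

(* Candidate sequences: all sequences of length <= k with entries in 1..n,
   each listed exactly once.  Every partition of perimeter n has at most
   n parts, all <= n, so it occurs in cand n n. *)
Fixpoint cand (n k : nat) : seq (seq nat) :=
  match k with
  | 0 => [:: [::]]
  | k'.+1 => [::] :: [seq x :: s | x <- iota 1 n, s <- cand n k']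
  end.

Definition Fset (d b n : nat) : seq (seq nat) :=
  [seq s <- cand n n | [&& is_partition s, perimeter s == n &
                          all (fun x => x %% d.+1 == b %% d.+1) s]].
Definition fcount (d b n : nat) : nat := size (Fset d b n).

Definition Hset (d a n : nat) : seq (seq nat) :=
  [seq s <- cand n n | [&& is_partition s, perimeter s == n,
                          d_distinct d s & all (fun x => a <= x) s]].

From mathcomp Require Import all_boot all_order all_algebra zify ring.

Set Implicit Arguments.
Unset Strict Implicit.
Unset Printing Implicit Defensive.

(* Both sides satisfy the same linear recurrence in the perimeter n.
   In F_d^(b)(n+1), a partition other than (b) either repeats its largest part,
   which can then be removed (leaving F_d^(b)(n), with one part fewer), or has a
   largest part exceeding the next part (or b) by at least d+1, which can then be
   lowered by d+1 (leaving F_d^(b)(n-d)); so f(n+1) = [b = n+1] + f(n) + f(n-d).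
   In H_d^(a)(n+1), a partition other than (a) either has a largest part exactly
   d above the next one, which can be removed (leaving H_d^(a)(n-d)), or has a
   largest part that can be lowered by 1 (leaving H_d^(a)(n)).  Hence
   |H_d^(a)(n)| = f_d^(a)(n), and since the part removed on the H side comes
   with the (n-d)-term instead of the n-term, the difference D of the two
   part counts satisfies D(n+1) = D(n) + D(n-d) + f(n) - f(n-d).  Since
   g = f_d^(1) - f_d^(d+1) satisfies g(n+1) = [n = 0] - [n = d] + g(n) + g(n-d),
   the convolution of f_d^(a) with g satisfies the same recurrence as D. *)

Arguments is_partition : simpl never.
Arguments d_distinct : simpl never.

Lemma big_pred1_uniq (R : Type) (idx : R) (op : Monoid.law idx) (T : eqType)
    (r : seq T) (x : T) (F : T -> R) :
  uniq r -> \big[op/idx]_(i <- r | i == x) F i = if x \in r then F x else idx.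
Proof.
move=> r_uniq; case: ifP => [xr | /negbT xr].
  by rewrite -big_filter (filter_pred1_uniq r_uniq xr) big_seq1.
by rewrite big_hasC // (@eq_has _ _ (pred1 x)) ?has_pred1 // => i; rewrite /= eq_sym.
Qed.

Lemma big_uniq_bij (R : Type) (idx : R) (op : Monoid.com_law idx) (T1 T2 : eqType)
    (r1 : seq T1) (r2 : seq T2) (P1 : pred T1) (P2 : pred T2) (h : T1 -> T2) (F : T2 -> R) :
  uniq r1 -> uniq r2 ->
  {in [pred x | (x \in r1) && P1 x] &, injective h} ->
  (forall x, x \in r1 -> P1 x -> (h x \in r2) && P2 (h x)) ->
  (forall y, y \in r2 -> P2 y -> exists2 x, (x \in r1) && P1 x & y = h x) ->
  \big[op/idx]_(y <- r2 | P2 y) F y = \big[op/idx]_(x <- r1 | P1 x) F (h x).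
Proof.
move=> r1_uniq r2_uniq h_inj h_into h_onto.
have r2_perm : perm_eq [seq y <- r2 | P2 y] (map h [seq x <- r1 | P1 x]).
  apply: uniq_perm; first exact: filter_uniq.
    rewrite map_inj_in_uniq ?filter_uniq // => x y.
    by rewrite !mem_filter !(andbC (P1 _)); exact: h_inj.
  move=> y; rewrite mem_filter; apply/andP/mapP => [[P2y r2y] | [x]].
    have [x /andP[r1x P1x] ->] := h_onto y r2y P2y.
    by exists x; rewrite // mem_filter P1x.
  by rewrite mem_filter => /andP[P1x r1x] ->; apply/andP; rewrite andbC h_into.
by rewrite -big_filter (perm_big _ r2_perm) big_map big_filter.
Qed.

Lemma eqn_mod_gap k x y : x %% k.+1 = y %% k.+1 -> y < x -> y + k.+1 <= x.
Proof.
move=> xy yx; have := eqn_mod_dvd k.+1 (ltnW yx); rewrite xy eqxx => /esym kxy.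
by have := dvdn_leq _ kxy; rewrite subn_gt0 => /(_ yx); lia.
Qed.

Lemma mem_cand N k s :
  (s \in cand N k) = (size s <= k) && all (fun x => 0 < x <= N) s.
Proof.
elim: k s => [|k IHk] [|x t] //=; rewrite in_cons /= ltnS.
apply/allpairsP/andP => [[[y u] [/= yN tu [-> ->]]] | [tk /andP[xN tN]]].
  by move: tu yN; rewrite IHk mem_iota add1n ltnS => /andP[-> ->] ->.
by exists (x, t); rewrite mem_iota add1n ltnS IHk tk xN tN.
Qed.

Lemma uniq_cand N k : uniq (cand N k).
Proof.
elim: k => [|k IHk] //=; apply/andP; split.
  by apply/negP => /allpairsP [[y u] [_ _]].
apply: allpairs_uniq => //; first exact: iota_uniq.
by move=> [x1 y1] [x2 y2] _ _ /= [-> ->].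
Qed.

Lemma part_cons x t :
  is_partition (x :: t) = [&& 0 < x, head 0 t <= x & is_partition t].
Proof.
rewrite /is_partition; case: t => [|z t] /=; first by rewrite !andbT.
by rewrite -!andbA; do !bool_congr.
Qed.

Lemma part_head_gt0 x t : is_partition (x :: t) -> 0 < x.
Proof. by rewrite part_cons => /and3P[]. Qed.

Lemma part_behead x t : is_partition (x :: t) -> is_partition t.
Proof. by rewrite part_cons => /and3P[]. Qed.

Lemma part_all_bounded s : is_partition s -> all (fun y => 0 < y <= head 0 s) s.
Proof.
elim: s => //= x t IHt; rewrite part_cons => /and3P[-> tx /IHt]; rewrite leqnn /=.
by apply: sub_all => y /andP[-> /leq_trans]; apply.
Qed.

Lemma largest_head s : is_partition s -> largest s = head 0 s.
Proof.
elim: s => //= x t IHt; rewrite part_cons => /and3P[_ tx /IHt tl].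
by rewrite /largest /= -/(largest t) tl; apply/maxn_idPl.
Qed.

Lemma perimeter_cons x t : is_partition (x :: t) -> perimeter (x :: t) = x + nparts t.
Proof. by move=> xt; rewrite /perimeter largest_head //= /nparts /=; lia. Qed.

Lemma part_in_cand N s : is_partition s -> perimeter s <= N -> s \in cand N N.
Proof.
case: s => [|x t] s_part; first by rewrite mem_cand.
rewrite perimeter_cons // mem_cand /nparts => xtN; have x_gt0 := part_head_gt0 s_part.
apply/andP; split; first by rewrite /=; lia.
move: (part_all_bounded s_part); apply: sub_all => y /andP[-> /= yx]; lia.
Qed.

Lemma d_distinct_cons d x t : d_distinct d (x :: t) = path (fun x y => d + y <= x) x t.
Proof. by rewrite /d_distinct -sorted_pairwise // => y x' z /=; lia. Qed.

Lemma d_distinct_cons2 d x z t :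
  d_distinct d [:: x, z & t] = (d + z <= x) && d_distinct d (z :: t).
Proof. by rewrite !d_distinct_cons. Qed.

Lemma uniq_Fset d b n : uniq (Fset d b n).
Proof. exact/filter_uniq/uniq_cand. Qed.

Lemma uniq_Hset d a n : uniq (Hset d a n).
Proof. exact/filter_uniq/uniq_cand. Qed.

Lemma mem_Fset_cons d b n x t :
  (x :: t \in Fset d b n) =
  [&& is_partition (x :: t), x + nparts t == n, x %% d.+1 == b %% d.+1
    & all (fun y => y %% d.+1 == b %% d.+1) t].
Proof.
rewrite mem_filter; have [xt_part | //] := boolP (is_partition (x :: t)).
rewrite perimeter_cons //; case: (x + nparts t =P n) => // xtn.
by rewrite (part_in_cand xt_part) ?perimeter_cons ?xtn // andbT.
Qed.

Lemma mem_Hset_cons d a n x t :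
  (x :: t \in Hset d a n) =
  [&& is_partition (x :: t), x + nparts t == n, d_distinct d (x :: t), a <= x & all (leq a) t].
Proof.
rewrite mem_filter; have [xt_part | //] := boolP (is_partition (x :: t)).
rewrite perimeter_cons //; case: (x + nparts t =P n) => // xtn.
by rewrite (part_in_cand xt_part) ?perimeter_cons ?xtn // andbT.
Qed.

(* Only nonempty partitions are summed: the empty partition lies in [Fset d b 0],
   and [Fsum d b 0 w = 0] lets the recurrences below use the truncated
   difference [m - d] also when [m < d]. *)
Definition Fsum d b n (w : seq nat -> nat) : nat := \sum_(s <- Fset d b n | s != [::]) w s.
Definition Hsum d a n (w : seq nat -> nat) : nat := \sum_(s <- Hset d a n | s != [::]) w s.

Definition Fnum d b n : nat := Fsum d b n (fun _ => 1).
Definition Fparts d b n : nat := Fsum d b n nparts.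
Definition Hnum d a n : nat := Hsum d a n (fun _ => 1).
Definition Hparts d a n : nat := Hsum d a n nparts.

Lemma sum_nparts_Fset d b n : \sum_(s <- Fset d b n) nparts s = Fparts d b n.
Proof. by rewrite /Fparts /Fsum [RHS]big_mkcond; apply: eq_bigr => -[]. Qed.

Lemma sum_nparts_Hset d a n : \sum_(s <- Hset d a n) nparts s = Hparts d a n.
Proof. by rewrite /Hparts /Hsum [RHS]big_mkcond; apply: eq_bigr => -[]. Qed.

Lemma fcount_Fnum d b n : 0 < n -> fcount d b n = Fnum d b n.
Proof.
move=> n_gt0; rewrite /fcount -sum1_size /Fnum /Fsum [RHS]big_mkcond.
apply: eq_big_seq => -[|x t] //.
by rewrite mem_filter => /andP[/and3P[_ /eqP n0 _] _]; rewrite -n0 in n_gt0.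
Qed.

Lemma Fsum0 d b w : Fsum d b 0 w = 0.
Proof. by rewrite /Fsum /Fset /= big_cons big_nil. Qed.

Lemma Hsum0 d a w : Hsum d a 0 w = 0.
Proof. by rewrite /Hsum /Hset /= big_cons big_nil. Qed.

Definition push_head k (s : seq nat) : seq nat := if s is x :: _ then (x + k) :: s else s.
Definition raise_head k (s : seq nat) : seq nat := if s is x :: t then (x + k) :: t else s.
Definition lead_gap_eq k (s : seq nat) : bool := if s is x :: y :: _ then x == y + k else false.

Section FRecurrence.
Variables d b : nat.
Hypothesis b_gt0 : 0 < b.
Hypothesis b_le : b <= d.+1.

Lemma residue_geq y : 0 < y -> y %% d.+1 = b %% d.+1 -> b <= y.
Proof.
move=> y_gt0 yb; rewrite leqNgt; apply/negP => y_lt_b.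
move: yb; rewrite (modn_small (leq_trans y_lt_b b_le)).
have [b_lt | b_ge] := ltnP b d.+1; first by rewrite modn_small //; lia.
have -> : b = d.+1 by apply/eqP; rewrite eqn_leq b_le b_ge.
by rewrite modnn; lia.
Qed.

Lemma Fset_lead_gap n x t :
  x :: t \in Fset d b n -> ~~ lead_gap_eq 0 (x :: t) -> x :: t != [:: b] ->
  head b t + d.+1 <= x.
Proof.
rewrite mem_Fset_cons part_cons => /and4P[/and3P[x_gt0 t_le_x _] _ /eqP x_res t_res] no_rep xt_ne.
case: t t_le_x t_res no_rep xt_ne => [|z t] /= z_le_x.
  move=> _ _ xt_ne; apply: eqn_mod_gap; rewrite // ltn_neqAle (residue_geq x_gt0 x_res) andbT.
  by apply: contraNneq xt_ne => ->.
rewrite addn0 => /andP[/eqP z_res _] x_ne_z _.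
by apply: eqn_mod_gap; [rewrite x_res z_res | rewrite ltn_neqAle z_le_x eq_sym andbT].
Qed.

Lemma Fsum_single m w :
  \sum_(s <- Fset d b m.+1 | (s != [::]) && ~~ lead_gap_eq 0 s && (s == [:: b])) w s
  = (b == m.+1) * w [:: b].
Proof.
rewrite (eq_bigl (fun s => s == [:: b])) => [|s /=]; last by rewrite andbC; case: eqP => // ->.
rewrite big_pred1_uniq ?uniq_Fset // mem_Fset_cons part_cons b_gt0 /= eqxx addn0 !andbT.
by case: (b == m.+1); rewrite ?mul1n ?mul0n.
Qed.

Lemma Fsum_push m w :
  \sum_(s <- Fset d b m.+1 | (s != [::]) && lead_gap_eq 0 s) w s
  = Fsum d b m (fun s => w (push_head 0 s)).
Proof.
apply: big_uniq_bij; rewrite ?uniq_Fset //.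
- by move=> [|x s] [|y t] //= _ _ [_ -> ->].
- move=> [|x t] //; rewrite !mem_Fset_cons => /and4P[xt_part /eqnP xtm x_res t_res] _.
  rewrite /= !addn0 part_cons (part_head_gt0 xt_part) leqnn xt_part x_res t_res eqxx /=.
  by apply/eqP; lia.
move=> [|x [|z t]] //; rewrite mem_Fset_cons /= addn0.
move=> /and4P[zt_part /eqnP ztm _ /andP[z_res t_res]] /eqP x_eq_z; subst x.
exists (z :: t); last by rewrite /= addn0.
by rewrite mem_Fset_cons z_res t_res (part_behead zt_part) /=; apply/eqP; lia.
Qed.

Lemma Fsum_raise m w :
  \sum_(s <- Fset d b m.+1 | (s != [::]) && ~~ lead_gap_eq 0 s && (s != [:: b])) w s
  = Fsum d b (m - d) (fun s => w (raise_head d.+1 s)).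
Proof.
apply: big_uniq_bij; rewrite ?uniq_Fset //.
- by move=> [|x s] [|y t] //= _ _ [/addIn -> ->].
- move=> [|y t] //; rewrite !mem_Fset_cons part_cons.
  move=> /and4P[/and3P[y_gt0 t_le_y t_part] /eqnP ytm y_res t_res] _.
  rewrite part_cons addn_gt0 orbT (leq_trans t_le_y (leq_addr _ _)) t_part modnDr y_res t_res /=.
  case: t {t_res t_part} ytm t_le_y => [|z t] /= ytm z_le_y.
    by rewrite !andbT; apply/andP; split; [apply/eqP | apply/eqP => -[]]; lia.
  by rewrite eqseq_cons andbF !andbT; lia.
move=> [|x t] // xt_F /andP[/andP[_ no_rep] xt_ne].
have gap := Fset_lead_gap xt_F no_rep xt_ne.
move: xt_F; rewrite mem_Fset_cons part_cons.
move=> /and4P[/and3P[_ t_le_x t_part] /eqnP xtm x_res t_res].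
have [hb_gt0 t_le_hb] : 0 < head b t /\ head 0 t <= head b t.
  by case: t {xtm t_res gap t_le_x no_rep xt_ne} t_part => //= z t /part_head_gt0.
have x_res' : (x - d.+1) %% d.+1 = x %% d.+1.
  by rewrite -[in RHS](@subnK d.+1 x) ?modnDr //; lia.
exists ((x - d.+1) :: t); last by rewrite /= subnK //; lia.
by rewrite mem_Fset_cons part_cons t_part x_res' x_res t_res !andbT; lia.
Qed.

Lemma Fsum_rec m w :
  Fsum d b m.+1 w = (b == m.+1) * w [:: b] + Fsum d b m (fun s => w (push_head 0 s))
                    + Fsum d b (m - d) (fun s => w (raise_head d.+1 s)).
Proof.
rewrite {1}/Fsum (bigID (lead_gap_eq 0)) /= Fsum_push (bigID (pred1 [:: b])) /=.
by rewrite Fsum_single Fsum_raise addnA [X in X + _]addnC.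
Qed.

Lemma Fnum_rec m : Fnum d b m.+1 = (b == m.+1) + Fnum d b m + Fnum d b (m - d).
Proof. by rewrite /Fnum Fsum_rec muln1. Qed.

Lemma Fparts_rec m :
  Fparts d b m.+1 = (b == m.+1) + (Fparts d b m + Fnum d b m) + Fparts d b (m - d).
Proof.
rewrite /Fparts Fsum_rec muln1 /Fsum -big_split /=.
by congr (_ + _ + _); apply: eq_bigr => -[|x s] //= _; rewrite addn1.
Qed.

End FRecurrence.

Section HRecurrence.
Variables d a : nat.
Hypothesis a_gt0 : 0 < a.

Lemma Hsum_single m w :
  \sum_(s <- Hset d a m.+1 | (s != [::]) && ~~ lead_gap_eq d s && (s == [:: a])) w s
  = (a == m.+1) * w [:: a].
Proof.
rewrite (eq_bigl (fun s => s == [:: a])) => [|s /=]; last by rewrite andbC; case: eqP => // ->.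
rewrite big_pred1_uniq ?uniq_Hset // mem_Hset_cons part_cons a_gt0 d_distinct_cons /= leqnn.
by rewrite addn0 !andbT; case: (a == m.+1); rewrite ?mul1n ?mul0n.
Qed.

Lemma Hsum_push m w :
  \sum_(s <- Hset d a m.+1 | (s != [::]) && lead_gap_eq d s) w s
  = Hsum d a (m - d) (fun s => w (push_head d s)).
Proof.
apply: big_uniq_bij; rewrite ?uniq_Hset //.
- by move=> [|x s] [|y t] //= _ _ [_ -> ->].
- move=> [|y t] //; rewrite !mem_Hset_cons !d_distinct_cons.
  move=> /and5P[yt_part /eqnP ytm yt_dd a_le_y t_a] _.
  have y_gt0 := part_head_gt0 yt_part.
  rewrite part_cons addn_gt0 y_gt0 leq_addr yt_part /= yt_dd [d + y]addnC leqnn a_le_y t_a.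
  by rewrite (leq_trans a_le_y (leq_addr _ _)) eqxx !andbT; apply/eqP; lia.
move=> [|x [|z t]] //; rewrite mem_Hset_cons !d_distinct_cons /=.
move=> /and5P[xt_part /eqnP xtm /andP[_ zt_dd] _ /andP[a_le_z t_a]] /eqP x_eq; subst x.
exists (z :: t) => //; rewrite mem_Hset_cons d_distinct_cons (part_behead xt_part) zt_dd.
by rewrite a_le_z t_a !andbT; apply/eqP; lia.
Qed.

Lemma Hsum_raise m w :
  \sum_(s <- Hset d a m.+1 | (s != [::]) && ~~ lead_gap_eq d s && (s != [:: a])) w s
  = Hsum d a m (fun s => w (raise_head 1 s)).
Proof.
apply: big_uniq_bij; rewrite ?uniq_Hset //.
- by move=> [|x s] [|y t] //= _ _ [/addIn -> ->].
- move=> [|y t] //; rewrite !mem_Hset_cons part_cons.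
  move=> /and5P[/and3P[y_gt0 t_le_y t_part] /eqnP ytm yt_dd a_le_y t_a] _.
  rewrite part_cons addn_gt0 orbT t_part t_a /=.
  case: t {t_part t_a} ytm t_le_y yt_dd => [|z t] /= ytm z_le_y.
    by move=> _; apply/andP; split; [lia | apply/eqP => -[]; lia].
  rewrite !d_distinct_cons2 eqseq_cons andbF => /andP[zy ->] /=; lia.
move=> [|x t] //; rewrite mem_Hset_cons part_cons.
move=> /and5P[/and3P[x_gt0 t_le_x t_part] /eqnP xtm xt_dd a_le_x t_a] /andP[/andP[_ no_gap] xt_ne].
exists ((x - 1) :: t); last by rewrite /= subnK.
rewrite mem_Hset_cons part_cons t_part t_a /= !andbT.
case: t {t_le_x t_part} xtm xt_dd no_gap xt_ne t_a => [|z t] /= xtm.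
  move=> _ _ xt_ne _; suff : x != a by lia.
  by apply: contraNneq xt_ne => ->.
by rewrite !d_distinct_cons2 => /andP[zx ->] x_ne_zd _ /andP[a_le_z _]; lia.
Qed.

Lemma Hsum_rec m w :
  Hsum d a m.+1 w = (a == m.+1) * w [:: a] + Hsum d a (m - d) (fun s => w (push_head d s))
                    + Hsum d a m (fun s => w (raise_head 1 s)).
Proof.
rewrite {1}/Hsum (bigID (lead_gap_eq d)) /= Hsum_push (bigID (pred1 [:: a])) /=.
by rewrite Hsum_single Hsum_raise addnA [X in X + _]addnC.
Qed.

Lemma Hnum_rec m : Hnum d a m.+1 = (a == m.+1) + Hnum d a (m - d) + Hnum d a m.
Proof. by rewrite /Hnum Hsum_rec muln1. Qed.

Lemma Hparts_rec m :
  Hparts d a m.+1 = (a == m.+1) + (Hparts d a (m - d) + Hnum d a (m - d)) + Hparts d a m.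
Proof.
rewrite /Hparts Hsum_rec muln1 /Hsum -big_split /=.
by congr (_ + _ + _); apply: eq_bigr => -[|x s] //= _; rewrite addn1.
Qed.

End HRecurrence.

Lemma Hnum_eq_Fnum d a n : 0 < a <= d.+1 -> Hnum d a n = Fnum d a n.
Proof.
case/andP=> a_gt0 a_le; elim/ltn_ind: n => -[_ | m IHm]; first by rewrite /Hnum /Fnum Hsum0 Fsum0.
by rewrite Hnum_rec // Fnum_rec // !IHm ?ltnS ?leq_subr // addnAC.
Qed.

Import GRing.Theory.
Local Open Scope ring_scope.

Section DelayedConvolution.
Variables (R : comRingType) (d : nat) (u g : nat -> R).
Hypotheses (u0 : u 0%N = 0) (g0 : g 0%N = 0).

Definition conv n : R := \sum_(0 <= k < n.+1) u (n - k)%N * g k.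

Lemma conv_interior n : conv n = \sum_(1 <= k < n) u (n - k)%N * g k.
Proof.
rewrite /conv big_ltn // g0 mulr0 add0r.
by case: n => [|n]; [rewrite !big_geq | rewrite big_nat_recr //= subnn u0 mul0r addr0].
Qed.

Lemma sum_mul_indicator m j : \sum_(0 <= k < m.+1) u (m - k)%N * (k == j)%:R = u (m - j)%N.
Proof.
rewrite big_mkord (eq_bigr (fun k : 'I_m.+1 => if k == j :> nat then u (m - k)%N else 0)).
  rewrite -big_mkcond (big_ord1_eq _ (fun k => u (m - k)%N)) ltnS.
  by case: leqP => // m_lt_j; rewrite (eqP _ : (m - j = 0)%N) ?u0 // subn_eq0 ltnW.
by move=> k _; case: eqP => _; rewrite ?mulr1 ?mulr0.
Qed.

Lemma sum_mul_delayed m : \sum_(0 <= k < m.+1) u (m - k)%N * g (k - d)%N = conv (m - d).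
Proof.
have [d_le_m | m_lt_d] := leqP d m; last first.
  rewrite (_ : (m - d = 0)%N); last by apply/eqP; rewrite subn_eq0 ltnW.
  rewrite /conv big_nat1 g0 mulr0 big1_seq // => k /andP[_].
  rewrite mem_index_iota => /andP[_ k_le_m].
  by rewrite (_ : (k - d = 0)%N) ?g0 ?mulr0 //; apply/eqP; rewrite subn_eq0; lia.
rewrite (@big_cat_nat _ _ _ d) //=; last by lia.
rewrite big_nat_cond big1 ?add0r; last first.
  by move=> k /andP[/andP[_ k_lt_d] _]; rewrite (_ : (k - d = 0)%N) ?g0 ?mulr0 //; apply/eqP; lia.
rewrite -{1}(add0n d) big_addn /conv (_ : (m.+1 - d = (m - d).+1)%N); last by lia.
by apply: eq_big_nat => k _; rewrite addnK; congr (u _ * _); lia.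
Qed.

Lemma conv_rec :
  (forall m, g m.+1 = (m == 0%N)%:R - (m == d)%:R + g m + g (m - d)%N) ->
  forall m, conv m.+1 = conv m + u m + conv (m - d) - u (m - d)%N.
Proof.
move=> g_rec m.
rewrite {1}/conv big_nat_recl // g0 mulr0 add0r.
under eq_big_nat => k _ do rewrite subSS g_rec !mulrDr mulrN.
rewrite !big_split /= sumrN !sum_mul_indicator sum_mul_delayed subn0.
by rewrite /conv; ring.
Qed.

End DelayedConvolution.

Section PartsDifference.
Variables d a : nat.
Hypothesis a_range : (0 < a <= d.+1)%N.

Let u n : int := Fnum d a n.
Let g n : int := (Fnum d 1 n)%:Z - (Fnum d d.+1 n)%:Z.

Let u0 : u 0%N = 0. Proof. by rewrite /u /Fnum Fsum0. Qed.
Let g0 : g 0%N = 0. Proof. by rewrite /g /Fnum !Fsum0. Qed.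

Let g_rec m : g m.+1 = (m == 0%N)%:R - (m == d)%:R + g m + g (m - d)%N.
Proof.
rewrite /g !Fnum_rec ?leqnn // !eqSS [0%N == m]eq_sym [d == m]eq_sym !PoszD.
by case: (m == 0%N); case: (m == d); rewrite /=; ring.
Qed.

Lemma parts_diff_conv n : (Fparts d a n)%:Z - (Hparts d a n)%:Z = conv u g n.
Proof.
have [a_gt0 a_le] := andP a_range.
elim/ltn_ind: n => -[_ | m IHm].
  by rewrite /Fparts /Hparts Fsum0 Hsum0 /conv big_nat1 g0 mulr0.
rewrite (conv_rec u0 g0 g_rec) -!IHm ?ltnS ?leq_subr // Fparts_rec // Hparts_rec //.
by rewrite /u -!Hnum_eq_Fnum // !PoszD; ring.
Qed.

End PartsDifference.

Theorem theorem1p2 (d n a : nat) :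
  (1 <= d)%N -> (1 <= n)%N -> (1 <= a <= d.+1)%N ->
  ((\sum_(s <- Fset d a n) nparts s)%N%:Z - (\sum_(s <- Hset d a n) nparts s)%N%:Z
   : int)
  = (\sum_(1 <= m < n) (fcount d a (n - m) * fcount d 1 m)%N%:Z)
    - (\sum_(1 <= m < n) (fcount d a (n - m) * fcount d d.+1 m)%N%:Z).
Proof.
move=> _ n_gt0 a_range.
rewrite sum_nparts_Fset sum_nparts_Hset parts_diff_conv // conv_interior; last 2 first.
- by rewrite /Fnum Fsum0.
- by rewrite /Fnum !Fsum0 subrr.
rewrite -sumrB; apply: eq_big_nat => m /andP[m_gt0 m_lt_n].
by rewrite !fcount_Fnum ?subn_gt0 // !PoszM -mulrBr.
Qed.
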